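(* Consider a restless bandit, set system $(N^{\{0,1\}},\mathcal F)$ as in the context, and suppose the bandit is PCL-indexable relative to $b^u$ and $\mathcal F$-policies, with the adaptive-greedy algorithm on input $\widehat{\mathbf h}^0_{N^{\{0,1\}}}$ producing $\boldsymbol\pi=(\pi_1,\dots,\pi_n)$ and $\boldsymbol\nu$; let $S_k=\{\pi_k,\dots,\pi_n\}$ ($1\le k\le n$), $S_{n+1}=\emptyset$, and $v^S_i(\nu)=v^S_i+\nu b^S_i$. Then for each $i\in N$, $v_i(\nu)$ is continuous, concave and piecewise linear in $\nu$, and $$v_i(\nu)=\min\{v^{S_k}_i(\nu):1\le k\le n+1\}=\begin{cases} v^{S_1}_i(\nu), & \nu\in(-\infty,\nu_{\pi_1}],\\ v^{S_k}_i(\nu), & \nu\in[\nu_{\pi_{k-1}},\nu_{\pi_k}],\ 2\le k\le n,\\ v^{S_{n+1}}_i(\nu), & \nu\in[\nu_{\pi_n},+\infty).\end{cases}$$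
   Context: Restless bandit: finite state space $N=N^{\{0,1\}}\cup N^{\{1\}}$ (disjoint; controllable and uncontrollable states); actions $a\in\{0,1\}$; one-period costs $h^a_i$, transition probabilities $p^a_{ij}$ with $p^1_{ij}=p^0_{ij}$ for $i\in N^{\{1\}}$; discount factor $\beta\in(0,1)$; activity weights $\theta^1_j>0$. Stationary policies $u:N\to[0,1]$ (probability of active action) with $u(i)=1$ on $N^{\{1\}}$. $v^u_i=E^u_i[\sum_{t\ge0}h^{a(t)}_{X(t)}\beta^t]$, $b^u_i=E^u_i[\sum_{t\ge0}\theta^1_{X(t)}a(t)\beta^t]$. For $S\subseteq N^{\{0,1\}}$ the $S$-active policy is active on $S\cup N^{\{1\}}$, passive elsewhere; $v^S_i,b^S_i$ its measures. $v_i(\nu)=\min_u\{v^u_i+\nu b^u_i\}$. Marginal workloads $w^S_i=\theta^1_i1\{i\in N^{\{0,1\}}\}+\beta\sum_j(p^1_{ij}-p^0_{ij})b^S_j$. $\widehat{\mathbf h}^0=\mathbf h^0-(\mathbf I-\beta\mathbf P^0)(\mathbf I-\beta\mathbf P^1)^{-1}\mathbf h^1$. $\mathcal F\subseteq2^{N^{\{0,1\}}}$: $\emptyset\in\mathcal F$; each nonempty $S\in\mathcal F$ has nonempty $\partial^-S=\{j\in S:S\setminus\{j\}\in\mathcal F\}$; each $S\in\mathcal F$ other than $N^{\{0,1\}}$ has $j\notin S$ with $S\cup\{j\}\in\mathcal F$. Adaptive-greedy algorithm on input $\mathbf c$, $n=|N^{\{0,1\}}|$: $S_1=N^{\{0,1\}}$,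 $y^{S_1}=\min\{c_j/w^{S_1}_j:j\in\partial^-S_1\}$, $\pi_1$ a minimizer, $\nu_{\pi_1}=y^{S_1}$; for $k=2..n$: $S_k=S_{k-1}\setminus\{\pi_{k-1}\}$, $y^{S_k}=\min\{(c_j-\sum_{l<k}y^{S_l}w^{S_l}_j)/w^{S_k}_j:j\in\partial^-S_k\}$, $\pi_k$ a minimizer, $\nu_{\pi_k}=\nu_{\pi_{k-1}}+y^{S_k}$. PCL-indexability: (i) $w^S_j>0$ for $S\in\mathcal F$, $j\in N^{\{0,1\}}$; (ii) on input $(\widehat h^0_j)_{j\in N^{\{0,1\}}}$ the output satisfies $\nu_{\pi_1}\le\cdots\le\nu_{\pi_n}$. *)

From mathcomp Require Import all_boot all_order all_algebra.
From mathcomp Require Import all_classical all_reals all_analysis.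
Set Implicit Arguments. Unset Strict Implicit. Unset Printing Implicit Defensive.
Import Order.TTheory GRing.Theory Num.Theory.
Local Open Scope ring_scope.
Local Open Scope classical_set_scope.

Section Bandit.
Variables (R : realType) (m : nat).
(* ctrl = N^{0,1}; its complement = N^{1} (uncontrollable states) *)
Variable ctrl : {set 'I_m}.
Variables (P0 P1 : 'M[R]_m) (h0 h1 theta1 : 'I_m -> R) (beta : R).

Definition stochastic (P : 'M[R]_m) : Prop :=
  (forall i j, 0 <= P i j) /\ (forall i, \sum_j P i j = 1).

(* admissible stationary (randomized) policy: u i = prob. of the active action *)
Definition admissible (u : 'I_m -> R) : Prop :=
  (forall i, 0 <= u i <= 1) /\ (forall i, i \notin ctrl -> u i = 1).

Definition Pu (u : 'I_m -> R) : 'M[R]_m :=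
  \matrix_(i, j) (u i * P1 i j + (1 - u i) * P0 i j).
Definition hu (u : 'I_m -> R) : 'cV[R]_m :=
  \col_i (u i * h1 i + (1 - u i) * h0 i).
Definition thu (u : 'I_m -> R) : 'cV[R]_m :=
  \col_i (theta1 i * u i).

(* expected total discounted reward E_i[sum_t r(X t, a t) beta^t]
   = sum_t beta^t ((P^u)^t r)_i *)
Definition disc_sum (P : 'M[R]_m) (r : 'cV[R]_m) (i : 'I_m) : R :=
  limn (fun n => \sum_(t < n) beta ^+ t * ((P ^+ t *m r) i ord0)).

Definition vu (u : 'I_m -> R) (i : 'I_m) : R := disc_sum (Pu u) (hu u) i.
Definition bu (u : 'I_m -> R) (i : 'I_m) : R := disc_sum (Pu u) (thu u) i.

Definition Spol (S : {set 'I_m}) (i : 'I_m) : R :=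
  if (i \in S) || (i \notin ctrl) then 1 else 0.
Definition vS (S : {set 'I_m}) (i : 'I_m) : R := vu (Spol S) i.
Definition bS (S : {set 'I_m}) (i : 'I_m) : R := bu (Spol S) i.
Definition vSnu (S : {set 'I_m}) (nu : R) (i : 'I_m) : R := vS S i + nu * bS S i.

Definition vopt (nu : R) (i : 'I_m) : R :=
  inf [set vu u i + nu * bu u i | u in admissible].

Definition wS (S : {set 'I_m}) (i : 'I_m) : R :=
  theta1 i * (i \in ctrl)%:R + beta * \sum_j (P1 i j - P0 i j) * bS S j.

Definition hhat0 : 'I_m -> R :=
  let c := (\col_i h0 i) - (1%:M - beta *: P0) *m invmx (1%:M - beta *: P1) *m (\col_i h1 i)
  in fun i => c i ord0.

Definition dminus (F : {set {set 'I_m}}) (S : {set 'I_m}) : {set 'I_m} :=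
  [set j in S | S :\ j \in F].

Definition accessible_setsys (F : {set {set 'I_m}}) : Prop :=
  (forall S, S \in F -> S \subset ctrl) /\
  (finset.set0 : {set 'I_m}) \in F /\
  (forall S, S \in F -> S != finset.set0 -> dminus F S != finset.set0) /\
  (forall S, S \in F -> S != ctrl -> exists2 j, j \notin S & S :|: [set j] \in F).

(* S_{k+1} = {pi_{k+1}, ..., pi_n} (0-indexed: k-th suffix) *)
Definition Ssuf (pi : seq 'I_m) (k : nat) : {set 'I_m} := [set x in drop k pi].

(* (pi, nu) is a (possible) output of the adaptive-greedy algorithm on input c
   (any tie-breaking among minimizers).  pi = [:: pi_1; ...; pi_n],
   nu is indexed by states, nu pi_k = nu_{pi_k}. *)
Definition greedy_output (F : {set {set 'I_m}}) (c : 'I_m -> R)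
    (pi : seq 'I_m) (nu : 'I_m -> R) : Prop :=
  uniq pi /\ [set x in pi] = ctrl /\
  exists y : nat -> R, forall (k : nat) (p : 'I_m), onth pi k = Some p ->
    let r j := (c j - \sum_(l < k) y l * wS (Ssuf pi l) j) / wS (Ssuf pi k) j in
    [/\ p \in dminus F (Ssuf pi k),
        y k = r p,
        (forall j, j \in dminus F (Ssuf pi k) -> y k <= r j) &
        nu p = \sum_(l < k.+1) y l].

Definition PCL_indexable (F : {set {set 'I_m}}) (pi : seq 'I_m) (nu : 'I_m -> R) : Prop :=
  (forall S j, S \in F -> j \in ctrl -> 0 < wS S j) /\
  greedy_output F hhat0 pi nu /\
  (forall k p q, onth pi k = Some p -> onth pi k.+1 = Some q -> nu p <= nu q).

End Bandit.

Definition concave_fun (R : realType) (f : R -> R) : Prop :=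
  forall x y t, 0 <= t <= 1 -> t * f x + (1 - t) * f y <= f (t * x + (1 - t) * y).

Definition piecewise_linear (R : realType) (f : R -> R) : Prop :=
  exists s : seq R, forall a b, a <= b -> (forall c, c \in s -> ~ (a < c < b)) ->
    exists p q : R, forall x, a <= x <= b -> f x = p + q * x.

From mathcomp Require Import all_boot all_order all_algebra.
From mathcomp Require Import all_classical all_reals all_analysis.
From mathcomp Require Import lra ring.
Import Order.TTheory GRing.Theory Num.Theory numFieldNormedType.Exports.
Set Implicit Arguments. Unset Strict Implicit. Unset Printing Implicit Defensive.
Local Open Scope ring_scope.

(* The value of a stationary policy is the unique
   solution of its Bellman equation, and by a minimum principle for
   [v = d + beta P v] the S-active policy is optimal as soon as the reduced cost
   of activating j (passive minus active Q-value against the S-policy's own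
   value) is >= 0 on S and <= 0 off S.  Along the adaptive-greedy run, the
   residual [hhat0 - sum_(l < k) y_l w^{S_l}] is exactly this reduced cost for
   S_k at x = nu_{pi_(k-1)} (read 0 for k = 1); it is affine in x with slope
   -w^{S_k} < 0, and it vanishes at pi_k for x = nu_{pi_k}, where deleting pi_k
   from S_k leaves the value unchanged.  Monotonicity of nu then yields the sign
   conditions on the whole window [nu_{pi_(k-1)}, nu_{pi_k}], so that
   v(x) = v^{S_k}(x) there: v is the lower envelope of the n + 1 affine
   functions x |-> v^{S_k}(x), hence concave, Lipschitz and piecewise linear. *)

Section DiscountedSums.
Variables (R : realType) (m : nat) (beta : R).
Hypothesis beta01 : 0 < beta < 1.

Lemma discounted_fixpoint_ge0 (P : 'M[R]_m) (D d : 'cV[R]_m) :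
  stochastic P -> (forall i, 0 <= d i 0) -> D = d + beta *: (P *m D) ->
  forall i, 0 <= D i 0.
Proof.
move=> [P_ge0 P_sum1] d_ge0 fixD i.
pose k := [arg min_(j < i) D j 0]%O.
have Dk_min j : D k 0 <= D j 0 by rewrite /k; case: arg_minP => // a _; apply.
have Dk_eq : D k 0 = d k 0 + beta * \sum_j P k j * D j 0.
  by rewrite {1}fixD !mxE; congr (_ + _); rewrite !mxE.
(* At an entry where [D] is minimal, the equation gives [D k >= d k + beta D k]. *)
have Dk_ge : d k 0 + beta * D k 0 <= D k 0.
  rewrite [leRHS]Dk_eq lerD2l; apply: ler_wpM2l; first by case/andP: beta01 => /ltW.
  rewrite -[leLHS]mul1r -(P_sum1 k) mulr_suml.
  by apply: ler_sum => j _; apply: ler_wpM2l.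
apply: le_trans (Dk_min i); have := d_ge0 k; case/andP: beta01 => _ b1; nra.
Qed.

Lemma discounted_eq0 (P : 'M[R]_m) (X : 'cV[R]_m) :
  stochastic P -> (1%:M - beta *: P) *m X = 0 -> X = 0.
Proof.
move=> sP; rewrite mulmxBl mul1mx -scalemxAl => /subr0_eq fixX.
have zero_ge0 i : 0 <= (0 : 'cV[R]_m) i 0 by rewrite mxE.
have X_ge0 : forall i, 0 <= X i 0.
  by apply: (discounted_fixpoint_ge0 sP zero_ge0); rewrite add0r -fixX.
have NX_ge0 : forall i, 0 <= (- X) i 0.
  by apply: (discounted_fixpoint_ge0 sP zero_ge0); rewrite add0r mulmxN scalerN -fixX.
apply/matrixP => i j; rewrite [j]ord1 mxE; apply/le_anti.
by have := NX_ge0 i; rewrite mxE oppr_ge0 => ->; rewrite X_ge0.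
Qed.

Lemma discounted_unitmx (P : 'M[R]_m) :
  stochastic P -> (1%:M - beta *: P) \in unitmx.
Proof.
move=> sP; rewrite -unitmx_tr -row_free_unit -kermx_eq0.
apply/eqP/row_matrixP => k; rewrite row0.
have /(congr1 trmx) : row k (kermx (1%:M - beta *: P)^T) *m (1%:M - beta *: P)^T = 0.
  by rewrite -row_mul mulmx_ker row0.
rewrite trmx_mul trmxK trmx0 => /(discounted_eq0 sP)/(congr1 trmx).
by rewrite trmxK trmx0.
Qed.

Lemma discounted_solveP (P : 'M[R]_m) (v f : 'cV[R]_m) : stochastic P ->
  v = f + beta *: (P *m v) <-> v = invmx (1%:M - beta *: P) *m f.
Proof.
move=> sP; have unitA := discounted_unitmx sP.
have mulA w : (1%:M - beta *: P) *m w = w - beta *: (P *m w).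
  by rewrite mulmxBl mul1mx scalemxAl.
split=> [fix_v | ->].
  by rewrite -[LHS](mulKmx unitA v) mulA {1}fix_v addrK.
set w := invmx _ *m f.
have -> : f = w - beta *: (P *m w) by rewrite -mulA mulKVmx.
by rewrite subrK.
Qed.

Lemma stochastic_pow_bound (P : 'M[R]_m) (W : 'cV[R]_m) n i :
  stochastic P -> `|(P ^+ n *m W) i 0| <= \sum_j `|W j 0|.
Proof.
move=> [P_ge0 P_sum1]; elim: n i => [|n IHn] i.
  by rewrite expr0 mul1mx (bigD1 i) //= ler_wpDr // sumr_ge0.
rewrite exprS -mulmxE -mulmxA mxE; apply: le_trans (ler_norm_sum _ _ _) _.
apply: le_trans (_ : \sum_k P i k * \sum_j `|W j 0| <= _); last first.
  by rewrite -mulr_suml P_sum1 mul1r.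
by apply: ler_sum => k _; rewrite normrM ger0_norm //; apply: ler_wpM2l.
Qed.

Lemma discounted_partial_sum (P : 'M[R]_m) (W : 'cV[R]_m) i n :
  \sum_(t < n) beta ^+ t * ((P ^+ t *m (W - beta *: (P *m W))) i 0) =
    W i 0 - beta ^+ n * ((P ^+ n *m W) i 0).
Proof.
elim: n => [|n IHn]; first by rewrite big_ord0 expr0 mul1r mul1mx subrr.
have powS : P ^+ n *m P = P ^+ n.+1 by rewrite exprSr mulmxE.
rewrite big_ord_recr /= IHn mulmxBr -scalemxAr mulmxA powS [beta ^+ n.+1]exprSr !mxE; ring.
Qed.

Lemma disc_sumE (P : 'M[R]_m) (r : 'cV[R]_m) i : stochastic P ->
  disc_sum beta P r i = (invmx (1%:M - beta *: P) *m r) i 0.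
Proof.
move=> sP; set W := invmx _ *m r.
have -> : r = W - beta *: (P *m W).
  rewrite /W -[X in X - _]mul1mx scalemxAl -mulmxBl mulmxA.
  by rewrite mulmxV ?mul1mx // discounted_unitmx.
rewrite /disc_sum; under eq_fun do rewrite discounted_partial_sum.
apply: cvg_lim => //; rewrite -[X in (_ --> X)%classic]subr0.
apply: cvgB; first exact: cvg_cst.
have [b0 b1] := andP beta01.
pose M := \sum_j `|W j 0|.
have bound_cvg0 : ((fun n => beta ^+ n * M) @ \oo --> (0 : R))%classic.
  by rewrite -(mul0r M); apply: cvgMl; apply: cvg_expr; rewrite ger0_norm // ltW.
apply: (@squeeze_cvgr _ _ _ _ (fun n => - (beta ^+ n * M)) (fun n => beta ^+ n * M)) => //.
- near=> n; have := stochastic_pow_bound W n i sP; rewrite ler_norml => /andP[lo hi].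
  by rewrite -mulrN !ler_wpM2l // exprn_ge0 // ltW.
- by rewrite -oppr0; apply: cvgN.
Unshelve. all: by end_near.
Qed.

End DiscountedSums.

Lemma lipschitz_continuous (R : realType) (f : R -> R) (B : R) : 0 <= B ->
  (forall x z, `|f z - f x| <= B * `|z - x|) -> continuous f.
Proof.
move=> B_ge0 f_lip x; apply/cvgrPdist_le => e e_gt0.
have B1_gt0 : 0 < B + 1 by rewrite ltr_wpDl.
have d_gt0 : 0 < e / (B + 1) by rewrite divr_gt0.
near=> z; rewrite distrC; apply: le_trans (f_lip x z) _.
have zx_lt : `|z - x| < e / (B + 1) by rewrite distrC; near: z; apply: cvgr_dist_lt.
rewrite -[leRHS](divfK (lt0r_neq0 B1_gt0)) mulrC.
by apply: ler_pM; rewrite ?normr_ge0 ?lerDl // ltW.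
Unshelve. all: by end_near.
Qed.

Section AffineEnvelope.
Variables (R : realType) (N : nat) (a b : nat -> R) (f : R -> R).
Hypothesis f_le_affine : forall k x, (k <= N)%N -> f x <= a k + x * b k.
Hypothesis f_affine_at : forall x, exists2 k, (k <= N)%N & f x = a k + x * b k.

Lemma envelope_concave : concave_fun f.
Proof.
move=> x z t /andP[t_ge0 t_le1].
have [k kN ->] := f_affine_at (t * x + (1 - t) * z).
have := f_le_affine x kN; have := f_le_affine z kN.
have : 0 <= 1 - t by rewrite subr_ge0.
nra.
Qed.

Lemma envelope_continuous : continuous f.
Proof.
pose B := \sum_(k < N.+1) `|b k|.
have f_diff_le x z : f z - f x <= B * `|z - x|.
  have [k kN fx] := f_affine_at x.
  have bk_le : `|b k| <= B.
    by rewrite /B (bigD1 (Ordinal (kN : k < N.+1)%N)) //= lerDl sumr_ge0.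
  have := f_le_affine z kN; rewrite fx => fz.
  have : (z - x) * b k <= `|z - x| * B.
    by apply: le_trans (ler_norm _) _; rewrite normrM ler_wpM2l.
  lra.
apply: (@lipschitz_continuous _ _ B); first exact: sumr_ge0.
move=> x z; rewrite ler_norml f_diff_le andbT.
by have := f_diff_le z x; rewrite distrC; lra.
Qed.

End AffineEnvelope.

Lemma onth_lt (T : Type) (s : seq T) k x : onth s k = Some x -> (k < size s)%N.
Proof. by rewrite -onthTE => ->. Qed.

Lemma onth_exists (T : Type) (s : seq T) k :
  (k < size s)%N -> exists x, onth s k = Some x.
Proof. by rewrite -onthTE; case: onth => // x; exists x. Qed.

Lemma accessible_setsys_full (m : nat) (ctrl : {set 'I_m}) (F : {set {set 'I_m}}) :
  accessible_setsys ctrl F -> ctrl \in F.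
Proof.
case=> F_sub [set0_F [_ F_grow]].
suff grow d S : S \in F -> (#|ctrl| - #|S| <= d)%N -> ctrl \in F.
  by apply: (grow #|ctrl| _ set0_F); rewrite leq_subr.
elim: d S => [|d IHd] S SF le_d.
  by suff /eqP <- : S == ctrl by []; rewrite eqEcard F_sub //= -subn_eq0 -leqn0.
have [<-//|S_ne] := eqVneq S ctrl.
have [j jS SjF] := F_grow S SF S_ne; apply: (IHd _ SjF).
by move: le_d; rewrite finset.setUC cardsU1 jS add1n subnS; case: (_ - _)%N.
Qed.

Lemma inf_attained (R : realType) (E : set R) z : E z -> lbound E z -> inf E = z.
Proof.
move=> Ez z_lb; apply/le_anti; rewrite lb_le_inf ?andbT //; last by exists z.
by apply: ge_inf => //; exists z.
Qed.

Section Bandit.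
Variables (R : realType) (m : nat) (ctrl : {set 'I_m}).
Variables (P0 P1 : 'M[R]_m) (h0 h1 theta1 : 'I_m -> R) (beta : R).
Hypotheses (P0_stoch : stochastic P0) (P1_stoch : stochastic P1).
Hypothesis beta01 : 0 < beta < 1.

Implicit Types (S : {set 'I_m}) (u : 'I_m -> R) (x : R).

Local Notation admissible := (admissible ctrl).
Local Notation Pu := (Pu P0 P1).
Local Notation vS := (vS ctrl P0 P1 h0 h1 beta).
Local Notation bS := (bS ctrl P0 P1 theta1 beta).
Local Notation wS := (wS ctrl P0 P1 theta1 beta).
Local Notation vSnu := (vSnu ctrl P0 P1 h0 h1 theta1 beta).
Local Notation vopt := (vopt ctrl P0 P1 h0 h1 theta1 beta).
Local Notation hhat0 := (hhat0 P0 P1 h0 h1 beta).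

Definition cost (u : 'I_m -> R) (x : R) : 'cV[R]_m := hu h0 h1 u + x *: thu theta1 u.

Definition value (u : 'I_m -> R) (x : R) : 'cV[R]_m :=
  invmx (1%:M - beta *: Pu u) *m cost u x.

Definition qactive (X : 'cV[R]_m) (x : R) (j : 'I_m) : R :=
  h1 j + x * theta1 j + beta * \sum_k P1 j k * X k 0.

Definition qpassive (X : 'cV[R]_m) (j : 'I_m) : R := h0 j + beta * \sum_k P0 j k * X k 0.

Lemma stochastic_Pu u : admissible u -> stochastic (Pu u).
Proof.
move=> [u01 _]; have [P0_ge0 P0_sum1] := P0_stoch; have [P1_ge0 P1_sum1] := P1_stoch.
split=> [i j|i].
  by have /andP[u_ge0 u_le1] := u01 i; rewrite mxE addr_ge0 ?mulr_ge0 ?subr_ge0.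
under eq_bigr do rewrite mxE.
by rewrite big_split /= -!mulr_sumr P0_sum1 P1_sum1 !mulr1 addrC subrK.
Qed.

Lemma valueE u x i : admissible u ->
  vu P0 P1 h0 h1 beta u i + x * bu P0 P1 theta1 beta u i = value u x i 0.
Proof.
move=> adm_u; have Pu_stoch := stochastic_Pu adm_u.
by rewrite /vu /bu !disc_sumE // /value /cost mulmxDr -scalemxAr !mxE.
Qed.

Lemma value_bellmanP u x (X : 'cV[R]_m) : admissible u ->
  X = cost u x + beta *: (Pu u *m X) <-> X = value u x.
Proof. by move=> adm_u; exact: (discounted_solveP beta01 _ _ (stochastic_Pu adm_u)). Qed.

Lemma value_bellman u x : admissible u ->
  value u x = cost u x + beta *: (Pu u *m value u x).
Proof. by move=> adm_u; apply/value_bellmanP. Qed.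

Lemma bellman_rowE u x (X : 'cV[R]_m) j :
  (cost u x + beta *: (Pu u *m X)) j 0 = u j * qactive X x j + (1 - u j) * qpassive X j.
Proof.
rewrite !mxE; under eq_bigr do rewrite mxE mulrDl -!mulrA.
by rewrite big_split /= -!mulr_sumr /qactive /qpassive; ring.
Qed.

Lemma value_eq_on_ties u u' x : admissible u -> admissible u' ->
  (forall j, u' j != u j -> qactive (value u x) x j = qpassive (value u x) j) ->
  value u' x = value u x.
Proof.
move=> adm_u adm_u' ties; apply/esym/value_bellmanP => //.
rewrite {1}value_bellman //; apply/matrixP => j c; rewrite [c]ord1.
rewrite !bellman_rowE; have [->//|/ties->] := eqVneq (u' j) (u j); ring.
Qed.

Lemma value_le u u' x : admissible u -> admissible u' ->
  (forall j, 0 <= (u j - u' j) * (qpassive (value u x) j - qactive (value u x) x j)) ->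
  forall i, value u x i 0 <= value u' x i 0.
Proof.
move=> adm_u adm_u' improving i.
set D := value u' x - value u x.
set d := cost u' x + beta *: (Pu u' *m value u x) - value u x.
have fixD : D = d + beta *: (Pu u' *m D).
  rewrite /D /d {1}value_bellman // mulmxBr scalerBr.
  by apply/matrixP => a b; rewrite !mxE; ring.
have d_ge0 j : 0 <= d j 0.
  rewrite /d [X in _ - X]value_bellman // mxE [X in _ + X]mxE !bellman_rowE.
  have := improving j; nra.
have := discounted_fixpoint_ge0 beta01 (stochastic_Pu adm_u') d_ge0 fixD i.
by rewrite !mxE subr_ge0.
Qed.

Local Notation Spol := (Spol R ctrl).

Definition Sval (S : {set 'I_m}) (x : R) : 'cV[R]_m := value (Spol S) x.

Definition gap (S : {set 'I_m}) (x : R) (j : 'I_m) : R :=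
  qpassive (Sval S x) j - qactive (Sval S x) x j.

Lemma Spol_admissible S : admissible (Spol S).
Proof.
split=> i; rewrite /Spol; last by move=> ->; rewrite orbT.
by case: ifP; rewrite ?lexx ?ler01.
Qed.

Lemma vSnuE S x i : vSnu S x i = Sval S x i 0.
Proof. exact/valueE/Spol_admissible. Qed.

Lemma Sval_optimal S x :
  (forall j, j \in ctrl -> j \in S -> 0 <= gap S x j) ->
  (forall j, j \in ctrl -> j \notin S -> gap S x j <= 0) ->
  forall u, admissible u -> forall i, Sval S x i 0 <= value u x i 0.
Proof.
move=> gap_in gap_out u adm_u; apply: (value_le (Spol_admissible S) adm_u) => j.
have [/(_ j)/andP[u_ge0 u_le1] u_unctrl] := adm_u.
rewrite -/(gap S x j) /Spol; case: (boolP (j \in ctrl)) => [jc|/[dup]/u_unctrl-> _].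
  case: (boolP (j \in S)) => jS /=.
    by apply: mulr_ge0; [rewrite subr_ge0 | exact: gap_in].
  by rewrite sub0r mulNr -mulrN; apply: mulr_ge0; [|rewrite oppr_ge0; exact: gap_out].
by rewrite orbT subrr mul0r.
Qed.

Lemma Sval_setD1 S x p : gap S x p = 0 -> Sval (S :\ p) x = Sval S x.
Proof.
move=> gap_p; apply: (value_eq_on_ties (Spol_admissible _) (Spol_admissible _)) => j.
rewrite /Spol !inE; have [->|] := eqVneq j p; last by rewrite andTb eqxx.
by move=> _; apply/esym/eqP; rewrite -subr_eq0 -[_ - _]/(gap S x p) gap_p.
Qed.

Lemma gap_setD1 S x p j : gap S x p = 0 -> gap (S :\ p) x j = gap S x j.
Proof. by move=> gap_p; rewrite /gap Sval_setD1. Qed.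

Lemma gap_shift S x x' j : j \in ctrl ->
  gap S x j = gap S x' j + (x' - x) * wS S j.
Proof.
move=> jc; have sumE (P : 'M[R]_m) y :
    \sum_k P j k * Sval S y k 0 = \sum_k P j k * vS S k + y * \sum_k P j k * bS S k.
  rewrite mulr_sumr -big_split /=; apply: eq_bigr => k _.
  by rewrite -vSnuE /vSnu; ring.
rewrite /gap /qpassive /qactive /wS jc mulr1 !sumE.
have -> : \sum_k (P1 j k - P0 j k) * bS S k =
    \sum_k P1 j k * bS S k - \sum_k P0 j k * bS S k.
  by rewrite -sumrB; apply: eq_bigr => k _; rewrite mulrBl.
ring.
Qed.

Lemma hhat0_gap j : hhat0 j = gap ctrl 0 j.
Proof.
have Spol_ctrl i : Spol ctrl i = 1 by rewrite /Spol orbN.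
set v1 := Sval ctrl 0.
have v1_row : v1 j 0 = qactive v1 0 j.
  rewrite /v1 /Sval {1}(value_bellman _ (Spol_admissible ctrl)) bellman_rowE Spol_ctrl.
  by rewrite subrr mul0r addr0 mul1r.
have Pu_ctrl : Pu (Spol ctrl) = P1.
  by apply/matrixP => a b; rewrite !mxE Spol_ctrl subrr mul0r addr0 mul1r.
have cost_ctrl : cost (Spol ctrl) 0 = \col_i h1 i.
  by apply/matrixP => a b; rewrite !mxE Spol_ctrl subrr !mul0r !addr0 mul1r.
have v1E : v1 = invmx (1%:M - beta *: P1) *m \col_i h1 i.
  by rewrite /v1 /Sval /value Pu_ctrl cost_ctrl.
rewrite /gap -/v1; clearbody v1.
rewrite /hhat0 -mulmxA -v1E mulmxBl mul1mx -scalemxAl !mxE v1_row /qpassive.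
ring.
Qed.

Section Greedy.
Variables (F : {set {set 'I_m}}) (pi : seq 'I_m) (nu : 'I_m -> R) (y : nat -> R).
Local Notation n := (size pi).
Local Notation S_ k := (Ssuf pi k).
Hypothesis F_accessible : accessible_setsys ctrl F.
Hypothesis wS_gt0 : forall S j, S \in F -> j \in ctrl -> 0 < wS S j.
Hypothesis pi_uniq : uniq pi.
Hypothesis pi_ctrl : [set p in pi] = ctrl.
Hypothesis pi_greedy : forall k p, onth pi k = Some p ->
  let r j := (hhat0 j - \sum_(l < k) y l * wS (S_ l) j) / wS (S_ k) j in
  [/\ p \in dminus F (S_ k), y k = r p,
      forall j, j \in dminus F (S_ k) -> y k <= r j &
      nu p = \sum_(l < k.+1) y l].
Hypothesis nu_mono : forall k p q, onth pi k = Some p -> onth pi k.+1 = Some q -> nu p <= nu q.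

(* Indices are 0-based: [S_ k] is the paper's S_{k+1}, [mu k] is nu_{pi_k} for
   [k > 0] (see [nu_pi]), and [window k x] places x in the paper's interval
   [nu_{pi_k}, nu_{pi_(k+1)}], on which S_{k+1} is optimal. *)
Definition mu k := \sum_(l < k) y l.

Lemma Ssuf0 : S_ 0 = ctrl.
Proof. by rewrite /Ssuf drop0. Qed.

Lemma SsufS k p : onth pi k = Some p -> S_ k.+1 = S_ k :\ p.
Proof.
move=> kp; have dropE : drop k pi = p :: drop k.+1 pi.
  by rewrite (drop_nth p (onth_lt kp)) -odflt_onth kp.
have := drop_uniq k pi_uniq; rewrite dropE /= => /andP[p_out _].
by apply/setP => z; rewrite !inE dropE inE; case: eqVneq => // ->; rewrite (negbTE p_out).
Qed.

Lemma mem_Ssuf k l j : onth pi l = Some j -> (j \in S_ k) = (k <= l)%N.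
Proof.
move=> lj; have ln := onth_lt lj; have nthE : nth j pi l = j by rewrite -odflt_onth lj.
rewrite /Ssuf inE; case: (leqP k l) => kl.
  by rewrite -nthE -[l](subnKC kl) -nth_drop mem_nth // size_drop ltn_sub2r // (leq_ltn_trans kl).
apply/negP => j_drop.
have j_take : j \in take k pi by rewrite -nthE -(nth_take _ kl) mem_nth // size_take; case: ifP.
move: pi_uniq; rewrite -(cat_take_drop k pi) cat_uniq => /and3P[_ /hasPn/(_ j j_drop)].
by rewrite j_take.
Qed.

Lemma pi_in_ctrl l j : onth pi l = Some j -> j \in ctrl.
Proof. by move=> lj; rewrite -pi_ctrl inE; apply/onthP; exists l. Qed.

Lemma ctrl_in_pi j : j \in ctrl -> exists l, onth pi l = Some j.
Proof. by rewrite -pi_ctrl inE => /onthP. Qed.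

Lemma Ssuf_in_F k : (k <= n)%N -> S_ k \in F.
Proof.
case: k => [|k] kn; first by rewrite Ssuf0 accessible_setsys_full.
have [p kp] := onth_exists kn; rewrite (SsufS kp).
by have [/setIdP[]] := pi_greedy kp.
Qed.

Lemma wS_Ssuf_gt0 k j : (k <= n)%N -> j \in ctrl -> 0 < wS (S_ k) j.
Proof. by move=> kn; apply/wS_gt0/Ssuf_in_F. Qed.

Lemma nu_pi k p : onth pi k = Some p -> nu p = mu k.+1.
Proof. by case/pi_greedy. Qed.

Lemma mu_mono k : (0 < k)%N -> (k < n)%N -> mu k <= mu k.+1.
Proof.
case: k => // k _ kn; have [p kp] := onth_exists (ltnW kn); have [q kq] := onth_exists kn.
by rewrite -(nu_pi kp) -(nu_pi kq) (nu_mono kp kq).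
Qed.

Lemma gap_antitone k x x' j : (k <= n)%N -> j \in ctrl -> x <= x' ->
  gap (S_ k) x' j <= gap (S_ k) x j.
Proof.
move=> kn jc le_xx'; rewrite (gap_shift _ x x') // lerDl.
by rewrite mulr_ge0 ?subr_ge0 // ltW // wS_Ssuf_gt0.
Qed.

Lemma greedy_pivot k p : onth pi k = Some p ->
  gap (S_ k) (mu k) p = hhat0 p - \sum_(l < k) y l * wS (S_ l) p ->
  gap (S_ k) (mu k.+1) p = 0.
Proof.
move=> kp gapE; have [_ ykE _ _] := pi_greedy kp.
have w_gt0 := wS_Ssuf_gt0 (ltnW (onth_lt kp)) (pi_in_ctrl kp).
rewrite (gap_shift _ _ (mu k)) ?(pi_in_ctrl kp) // gapE /mu big_ord_recr /= ykE.
by field; rewrite lt0r_neq0.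
Qed.

Lemma greedy_invariant k j : (k <= n)%N -> j \in ctrl ->
  hhat0 j - \sum_(l < k) y l * wS (S_ l) j = gap (S_ k) (mu k) j.
Proof.
elim: k j => [|k IHk] j kn jc; first by rewrite big_ord0 subr0 Ssuf0 hhat0_gap /mu big_ord0.
have [p kp] := onth_exists kn.
have pivot := greedy_pivot kp (esym (IHk _ (ltnW kn) (pi_in_ctrl kp))).
rewrite (SsufS kp) gap_setD1 // big_ord_recr /= opprD addrA IHk //; last exact: ltnW.
by rewrite (gap_shift _ _ (mu k.+1)) // /mu big_ord_recr /=; ring.
Qed.

Lemma gap_pivot k p : onth pi k = Some p -> gap (S_ k) (mu k.+1) p = 0.
Proof.
move=> kp; apply: greedy_pivot => //.
by rewrite greedy_invariant ?(pi_in_ctrl kp) //; apply/ltnW/(onth_lt kp).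
Qed.

Lemma gap_Ssuf_succ k p j : onth pi k = Some p ->
  gap (S_ k.+1) (mu k.+1) j = gap (S_ k) (mu k.+1) j.
Proof. by move=> kp; rewrite (SsufS kp) gap_setD1 // gap_pivot. Qed.

Lemma gap_active_ge0 k l j x :
  onth pi l = Some j -> (k <= l)%N -> x <= mu k.+1 -> 0 <= gap (S_ k) x j.
Proof.
move=> lj kl x_le; have ln := onth_lt lj; have jc := pi_in_ctrl lj.
apply: le_trans (gap_antitone _ jc x_le); last exact: ltnW (leq_ltn_trans kl ln).
suff chain d k' : (k' + d = l)%N -> 0 <= gap (S_ k') (mu k'.+1) j.
  exact: (chain (l - k)%N k (subnKC kl)).
elim: d k' => [|d IHd] k'; first by rewrite addn0 => ->; rewrite (gap_pivot lj).
rewrite addnS -addSn => k'dl.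
have k'n : (k'.+1 < n)%N by rewrite -k'dl in ln; exact: leq_ltn_trans (leq_addr _ _) ln.
have [p k'p] := onth_exists (ltnW k'n).
rewrite -(gap_Ssuf_succ _ k'p); apply: le_trans (IHd _ k'dl) _.
exact: gap_antitone (ltnW k'n) jc (mu_mono _ k'n).
Qed.

Lemma gap_passive_le0 k l j x :
  onth pi l = Some j -> (l < k)%N -> (k <= n)%N -> mu k <= x -> gap (S_ k) x j <= 0.
Proof.
move=> lj lk kn x_ge; have jc := pi_in_ctrl lj.
apply: le_trans (gap_antitone kn jc x_ge) _.
suff chain d : (l.+1 + d <= n)%N -> gap (S_ (l.+1 + d)) (mu (l.+1 + d)) j <= 0.
  by have := chain (k - l.+1)%N; rewrite subnKC //; apply.
elim: d => [|d IHd]; first by rewrite addn0 (gap_Ssuf_succ _ lj) (gap_pivot lj).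
rewrite addnS => dn; have [p dp] := onth_exists dn.
rewrite (gap_Ssuf_succ _ dp); apply: le_trans (IHd (ltnW dn)).
exact: gap_antitone (ltnW dn) jc (mu_mono _ dn).
Qed.

Definition window k x :=
  [/\ (k <= n)%N, (k < n)%N -> x <= mu k.+1 & (0 < k)%N -> mu k <= x].

Lemma Ssuf_optimal k x : window k x ->
  forall u, admissible u -> forall i, Sval (S_ k) x i 0 <= value u x i 0.
Proof.
case=> kn x_le x_ge; apply: Sval_optimal => j jc; have [l lj] := ctrl_in_pi jc.
  rewrite (mem_Ssuf _ lj) => kl; apply: (gap_active_ge0 lj kl).
  by apply/x_le/(leq_ltn_trans kl)/(onth_lt lj).
rewrite (mem_Ssuf _ lj) -ltnNge => lk; apply: (gap_passive_le0 lj lk kn).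
by apply/x_ge/(leq_ltn_trans _ lk).
Qed.

Lemma vopt_window k x i : window k x -> vopt x i = vSnu (S_ k) x i.
Proof.
move=> kx; apply: inf_attained; first by exists (Spol (S_ k)); first exact: Spol_admissible.
by move=> _ [u adm_u <-]; rewrite vSnuE valueE //; apply: Ssuf_optimal.
Qed.

Lemma window_interval a b : (forall c, c \in map nu pi -> ~ a < c < b) ->
  exists k, forall x, a <= x <= b -> window k x.
Proof.
move=> no_break; set k := find (fun p => a < nu p) pi.
exists k => x /andP[ax xb]; split; first exact: find_size.
- move=> kn; have [p kp] := onth_exists kn; rewrite -(nu_pi kp).
  have a_lt : a < nu p.
    by rewrite -(onth_nth p _ _ _ kp); apply: (@nth_find _ p (fun q => a < nu q)); rewrite has_find.
  have p_break : nu p \in map nu pi by apply/map_f/onthP; exists k.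
  apply: le_trans xb _; rewrite leNgt; apply/negP => nu_lt.
  by apply: (no_break _ p_break); rewrite a_lt.
- move=> k_gt0; have k'n : (k.-1 < n)%N by rewrite prednK //; exact: find_size.
  have [p k'p] := onth_exists k'n; rewrite -(prednK k_gt0) -(nu_pi k'p).
  apply: le_trans ax; rewrite leNgt -(onth_nth p _ _ _ k'p).
  by apply/negbT/(@before_find _ p (fun q => a < nu q)); rewrite ltn_predL.
Qed.

Lemma window_exists x : exists k, window k x.
Proof.
have [k kx] : exists k, forall z, x <= z <= x -> window k z.
  by apply: window_interval => c _ /andP[/lt_trans/[apply]]; rewrite ltxx.
by exists k; apply: kx; rewrite lexx.
Qed.

Lemma vopt_le_Ssuf k x i : (k <= n)%N -> vopt x i <= vSnu (S_ k) x i.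
Proof.
move=> kn; have [k' k'x] := window_exists x.
rewrite (vopt_window _ k'x) !vSnuE; apply: (Ssuf_optimal k'x).
exact: Spol_admissible.
Qed.

Lemma vopt_attained x i : exists2 k, (k <= n)%N & vopt x i = vSnu (S_ k) x i.
Proof. by have [k kx] := window_exists x; exists k; [case: kx | apply: vopt_window]. Qed.

Lemma vopt_continuous i : continuous (fun x => vopt x i).
Proof.
exact: (@envelope_continuous _ n (fun k => vS (S_ k) i) (fun k => bS (S_ k) i) (fun x => vopt x i)
  (fun k x => @vopt_le_Ssuf k x i) (vopt_attained ^~ i)).
Qed.

Lemma vopt_concave i : concave_fun (fun x => vopt x i).
Proof.
exact: (@envelope_concave _ n (fun k => vS (S_ k) i) (fun k => bS (S_ k) i) (fun x => vopt x i)
  (fun k x => @vopt_le_Ssuf k x i) (vopt_attained ^~ i)).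
Qed.

Lemma vopt_piecewise_linear i : piecewise_linear (fun x => vopt x i).
Proof.
exists (map nu pi) => a b _ no_break; have [k kx] := window_interval no_break.
by exists (vS (S_ k) i), (bS (S_ k) i) => x /kx/vopt_window ->; rewrite /vSnu mulrC.
Qed.

End Greedy.

End Bandit.

Theorem corollary4 (R : realType) (m : nat) (ctrl : {set 'I_m})
  (P0 P1 : 'M[R]_m) (h0 h1 theta1 : 'I_m -> R) (beta : R)
  (F : {set {set 'I_m}}) (pi : seq 'I_m) (nu : 'I_m -> R) :
  stochastic P0 -> stochastic P1 ->
  (forall i j, i \notin ctrl -> P1 i j = P0 i j) ->
  0 < beta < 1 ->
  (forall i, 0 < theta1 i) ->
  accessible_setsys ctrl F ->
  PCL_indexable ctrl P0 P1 h0 h1 theta1 beta F pi nu ->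
  let n := size pi in
  let V k x i := vSnu ctrl P0 P1 h0 h1 theta1 beta (Ssuf pi k) x i in
  let v x i := vopt ctrl P0 P1 h0 h1 theta1 beta x i in
  forall i : 'I_m,
    [/\ continuous (fun x : R => v x i),
        concave_fun (fun x => v x i),
        piecewise_linear (fun x => v x i),
        (forall x, (exists2 k, (k <= n)%N & v x i = V k x i) /\
                   (forall k, (k <= n)%N -> v x i <= V k x i)) &
        [/\ forall x p, onth pi 0 = Some p -> x <= nu p -> v x i = V 0%N x i,
            forall x k p q, (1 <= k < n)%N -> onth pi k.-1 = Some p ->
              onth pi k = Some q -> nu p <= x <= nu q -> v x i = V k x i &
            forall x p, (0 < n)%N -> onth pi n.-1 = Some p -> nu p <= x ->
              v x i = V n x i]].
Proof.
move=> P0s P1s _ b01 _ Facc [w_gt0 [[pi_uniq [pi_ctrl [y greedy]]] nu_mono]] n V v i.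
rewrite {}/n {}/V {}/v.
have vopt_window := vopt_window P0s P1s b01 Facc w_gt0 pi_uniq pi_ctrl greedy nu_mono.
have vopt_le := vopt_le_Ssuf P0s P1s b01 Facc w_gt0 pi_uniq pi_ctrl greedy nu_mono.
split.
- apply: (vopt_continuous P0s P1s b01 Facc w_gt0 pi_uniq pi_ctrl greedy nu_mono).
- apply: (vopt_concave P0s P1s b01 Facc w_gt0 pi_uniq pi_ctrl greedy nu_mono).
- apply: (vopt_piecewise_linear P0s P1s b01 Facc w_gt0 pi_uniq pi_ctrl greedy nu_mono).
- move=> x; split=> [|k /vopt_le//].
  exact: (vopt_attained P0s P1s b01 Facc w_gt0 pi_uniq pi_ctrl greedy nu_mono).
split.
- move=> x p p0 x_le; apply: vopt_window; split=> // _.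
  by rewrite -(nu_pi greedy p0).
- move=> x k p q /andP[k_gt0 kn] k'p kq /andP[x_ge x_le]; apply: vopt_window.
  split=> [|_|_]; first exact: ltnW.
    by rewrite -(nu_pi greedy kq).
  by rewrite -(prednK k_gt0) -(nu_pi greedy k'p).
- move=> x p n_gt0 n'p x_ge; apply: vopt_window; split=> // [|_]; first by rewrite ltnn.
  by rewrite -(prednK n_gt0) -(nu_pi greedy n'p).
Qed.
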